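(* Let $\mathsf{X}=\mathsf{X}^{(1)}+\mathsf{X}^{(2)}$ be a real time series of length $N$, let $L$ be a window length with $1<L<N$ and $K=N-L+1$. Suppose the $L$-rank of $\mathsf{X}$ equals $r$, the $L$-rank of $\mathsf{X}^{(m)}$ equals $r_m$ for $m=1,2$, and $r_1+r_2=r$. Then there exist symmetric positive semidefinite matrices $\mathbf{L}\in\mathbb{R}^{L\times L}$ and $\mathbf{R}\in\mathbb{R}^{K\times K}$, both of rank $r$ and consistent with each of $\mathbf{X}$, $\mathbf{X}^{(1)}$, $\mathbf{X}^{(2)}$, such that $\mathsf{X}^{(1)}$ and $\mathsf{X}^{(2)}$ are strongly $(\mathbf{L},\mathbf{R})$-separable.
   Context: For a series $\mathsf{Y}=(y_1,\dots,y_N)$ and window length $L$ ($1<L<N$, $K=N-L+1$), the $L$-trajectory matrix $\mathbf{Y}=\mathcal{T}(\mathsf{Y})\in\mathbb{R}^{L\times K}$ has $(i,j)$ entry $y_{i+j-1}$; its rank is the $L$-rank of $\mathsf{Y}$. Bold $\mathbf{X},\mathbf{X}^{(1)},\mathbf{X}^{(2)}$ denote the $L$-trajectory matrices of $\mathsf{X},\mathsf{X}^{(1)},\mathsf{X}^{(2)}$. A pair of symmetric positive semidefinite matrices $(\mathbf{L},\mathbf{R})$, $\mathbf{L}\in\mathbb{R}^{L\times L}$, $\mathbf{R}\in\mathbb{R}^{K\times K}$, is consistent with a matrix $\mathbf{Y}\in\mathbb{R}^{L\times K}$ if the column space of $\mathbf{L}$ contains the column space of $\mathbf{Y}$ and the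 column space of $\mathbf{R}$ contains the row space of $\mathbf{Y}$. For $\mathbf{Y}$ of rank $r$ and $(\mathbf{L},\mathbf{R})$ consistent with $\mathbf{Y}$, an $(\mathbf{L},\mathbf{R})$-SVD of $\mathbf{Y}$ is a decomposition $\mathbf{Y}=\sum_{i=1}^r\sigma_iP_iQ_i^{\mathrm{T}}$ with $\sigma_1\ge\dots\ge\sigma_r>0$, $P_i\in\mathbb{R}^L$, $Q_i\in\mathbb{R}^K$, $P_i^{\mathrm T}\mathbf{L}P_j=\delta_{ij}$ and $Q_i^{\mathrm T}\mathbf{R}Q_j=\delta_{ij}$. Two series $\mathsf{X}^{(1)},\mathsf{X}^{(2)}$ of length $N$ are weakly $(\mathbf{L},\mathbf{R})$-separable if $(\mathbf{X}^{(1)})^{\mathrm T}\mathbf{L}\mathbf{X}^{(2)}=\mathbf{0}_{K,K}$ and $\mathbf{X}^{(1)}\mathbf{R}(\mathbf{X}^{(2)})^{\mathrm T}=\mathbf{0}_{L,L}$; they are strongly $(\mathbf{L},\mathbf{R})$-separable if they are weakly $(\mathbf{L},\mathbf{R})$-separable and, writing $\mathbf{X}^{(m)}=\sum_{i=1}^{r_m}\sigma_{m,i}P_{m,i}Q_{m,i}^{\mathrm T}$ for $(\mathbf{L},\mathbf{R})$-SVDs, $\sigma_{1,i}\ne\sigma_{2,j}$ for all $i,j$. *)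

From HB Require Import structures.
From mathcomp Require Import all_boot all_order all_algebra.
Set Implicit Arguments. Unset Strict Implicit. Unset Printing Implicit Defensive.
Import Order.TTheory GRing.Theory Num.Theory.
Local Open Scope ring_scope.

(* L-trajectory matrix (0-indexed): entry (i,j) is y_(i+j), i < L, j < K = N-L+1.
   When L <= N, i + j < N always holds, so the default 0 is never used. *)
Definition traj (R : nzRingType) (N L : nat) (y : 'rV[R]_N) : 'M[R]_(L, N - L + 1) :=
  \matrix_(i < L, j < N - L + 1)
     (match (insub (i + j)%N : option 'I_N) with
      | Some k => y 0 k
      | None => 0
      end).

Definition psd (R : numDomainType) (n : nat) (A : 'M[R]_n) : Prop :=
  A^T = A /\ forall v : 'cV[R]_n, 0 <= (v^T *m A *m v) 0 0.

(* (L,R) consistent with Y: col space of Lm contains col space of Y,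
   col space of Rm contains row space of Y. *)
Definition consistent (R : fieldType) (p q : nat)
  (Lm : 'M[R]_p) (Rm : 'M[R]_q) (Y : 'M[R]_(p, q)) : Prop :=
  (Y^T <= Lm^T)%MS /\ (Y <= Rm^T)%MS.

Definition is_LRSVD (R : numFieldType) (p q : nat)
  (Lm : 'M[R]_p) (Rm : 'M[R]_q) (Y : 'M[R]_(p, q))
  (s : 'I_(\rank Y) -> R) (P : 'I_(\rank Y) -> 'cV[R]_p)
  (Q : 'I_(\rank Y) -> 'cV[R]_q) : Prop :=
  [/\ Y = \sum_(i < \rank Y) s i *: (P i *m (Q i)^T),
      (forall i j : 'I_(\rank Y), (i <= j)%N -> s j <= s i),
      (forall i, 0 < s i),
      (forall i j, (P i)^T *m Lm *m P j = (i == j)%:R%:M) &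
      (forall i j, (Q i)^T *m Rm *m Q j = (i == j)%:R%:M)].

Definition weakly_sep (R : fieldType) (p q : nat)
  (Lm : 'M[R]_p) (Rm : 'M[R]_q) (X1 X2 : 'M[R]_(p, q)) : Prop :=
  X1^T *m Lm *m X2 = 0 /\ X1 *m Rm *m X2^T = 0.

Definition strongly_sep (R : numFieldType) (p q : nat)
  (Lm : 'M[R]_p) (Rm : 'M[R]_q) (X1 X2 : 'M[R]_(p, q)) : Prop :=
  [/\ weakly_sep Lm Rm X1 X2,
      (exists s P Q, @is_LRSVD R p q Lm Rm X1 s P Q),
      (exists s P Q, @is_LRSVD R p q Lm Rm X2 s P Q) &
      (forall s1 P1 Q1 s2 P2 Q2,
         @is_LRSVD R p q Lm Rm X1 s1 P1 Q1 ->
         @is_LRSVD R p q Lm Rm X2 s2 P2 Q2 ->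
         forall i j, s1 i != s2 j)].

From HB Require Import structures.
From mathcomp Require Import all_boot all_order all_algebra.
Set Implicit Arguments. Unset Strict Implicit. Unset Printing Implicit Defensive.
Import Order.TTheory GRing.Theory Num.Theory.
Local Open Scope ring_scope.

(* Let A, B be the trajectory matrices of X1, X2; trajectory matrices are
   additive, so A + B is that of X1 + X2.  Factor A and B through their bases,
   A = a1^T b1 and B = a2^T b2, with a_m, b_m row-free with rank A (resp.
   rank B) rows.  Rank additivity rank (A + B) = rank A + rank B
   says exactly that the stacked matrices [a1; a2] and [b1; b2] are row-free.
   For a row-free Pt and an invertible S we build a PSD "frame form" F of the
   same rank with Pt F Pt^T = S S^T, whose row space contains that of Pt.
   Choosing S = diag(1, 2) on the left and S = 1 on the right makes the rows
   of a1, a2/2 and of b1, b2 orthonormal for (L, R) with a1 L a2^T = 0 and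
   b1 R b2^T = 0.  Consequently A and B are weakly separable, A has an
   (L, R)-SVD with all singular values 1 and B one with all singular values 2.
   Finally every (L, R)-SVD of a matrix Y with Y^T L Y R Y^T = c Y^T has all
   squared singular values equal to c, so no singular value of A (c = 1)
   equals one of B (c = 4): the separability is strong. *)

Section Gram.
Variable R : realFieldType.

Lemma gram_diag p q (M : 'M[R]_(p, q)) i :
  (M *m M^T) i i = \sum_k M i k ^+ 2.
Proof. by rewrite mxE; apply: eq_bigr => k _; rewrite mxE expr2. Qed.

Lemma gram_diag_ge0 p q (M : 'M[R]_(p, q)) i : 0 <= (M *m M^T) i i.
Proof. by rewrite gram_diag sumr_ge0 // => k _; rewrite sqr_ge0. Qed.

Lemma gram_eq0 p q (M : 'M[R]_(p, q)) : M *m M^T = 0 -> M = 0.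
Proof.
move=> MMt0; apply/matrixP => i k; rewrite mxE.
have /eqP := congr1 (fun X : 'M[R]_p => X i i) MMt0.
rewrite gram_diag mxE psumr_eq0 => [/allP /(_ k) |]; last by move=> j _; rewrite sqr_ge0.
by rewrite mem_index_enum => /(_ isT) /implyP /(_ isT); rewrite sqrf_eq0 => /eqP.
Qed.

(* Hence M M^T has the same kernel, and so the same rank, as M^T. *)
Lemma mxrank_gram p q (M : 'M[R]_(p, q)) : \rank (M *m M^T) = \rank M.
Proof.
apply/eqP; rewrite eqn_leq mxrankM_maxl /=.
set K := kermx (M *m M^T).
have KM0 : K *m M = 0.
  by apply: gram_eq0; rewrite trmx_mul mulmxA -(mulmxA K) mulmx_ker mul0mx.
have /mxrankS : (K <= kermx M)%MS by apply/sub_kermxP.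
by rewrite !mxrank_ker leq_sub2lE ?rank_leq_row.
Qed.

Lemma psd_gram k n (W : 'M[R]_(k, n)) : psd (W^T *m W).
Proof.
split=> [|v]; first by rewrite trmx_mul trmxK.
by have := gram_diag_ge0 ((W *m v)^T) 0; rewrite trmxK trmx_mul !mulmxA.
Qed.
End Gram.

Section FrameForm.
Variables (R : realFieldType) (k n : nat) (Pt : 'M[R]_(k, n)) (S : 'M[R]_k).
Hypotheses (Pt_free : row_free Pt) (S_unit : S \in unitmx).

Definition coframe : 'M[R]_(k, n) := S^T *m invmx (Pt *m Pt^T) *m Pt.
Definition frame_form : 'M[R]_n := coframe^T *m coframe.

Lemma gram_row_free_unit : Pt *m Pt^T \in unitmx.
Proof. by rewrite -row_free_unit /row_free mxrank_gram. Qed.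

Lemma coframe_Pt : coframe *m Pt^T = S^T.
Proof. by rewrite /coframe -!mulmxA mulVmx ?gram_row_free_unit // mulmx1. Qed.

Lemma Pt_coframe : Pt *m coframe^T = S.
Proof. by rewrite -[Pt in LHS]trmxK -trmx_mul coframe_Pt trmxK. Qed.

Lemma frame_form_gram : Pt *m frame_form *m Pt^T = S *m S^T.
Proof. by rewrite /frame_form mulmxA Pt_coframe -mulmxA coframe_Pt. Qed.

(* coframe is Pt multiplied by an invertible matrix. *)
Lemma coframe_coef_unit : S^T *m invmx (Pt *m Pt^T) \in unitmx.
Proof. by rewrite unitmx_mul unitmx_tr S_unit unitmx_inv gram_row_free_unit. Qed.

Lemma Pt_sub_frame_form : (Pt <= frame_form)%MS.
Proof.
have coframe_sub : (coframe <= frame_form)%MS.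
  have -> : coframe = invmx S *m (Pt *m frame_form).
    by rewrite /frame_form mulmxA Pt_coframe mulmxA mulVmx ?mul1mx.
  by rewrite mulmxA submxMl.
apply: submx_trans coframe_sub.
have -> : Pt = invmx (S^T *m invmx (Pt *m Pt^T)) *m coframe.
  by rewrite /coframe mulmxA mulVmx ?coframe_coef_unit ?mul1mx.
exact: submxMl.
Qed.

Lemma frame_form_rank : \rank frame_form = k.
Proof.
rewrite /frame_form -{2}(trmxK coframe) mxrank_gram mxrank_tr /coframe.
by rewrite mxrankMfree // mxrank_unit // coframe_coef_unit.
Qed.
End FrameForm.

Section Factorizations.
Variables (R : realFieldType) (p q : nat) (Lm : 'M[R]_p) (Rm : 'M[R]_q).

Lemma mulmx_tr_rows k m (X : 'M[R]_(k, p)) (Y : 'M[R]_(k, m)) :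
  X^T *m Y = \sum_(i < k) (row i X)^T *m row i Y.
Proof.
apply/matrixP => a b; rewrite !mxE summxE; apply: eq_bigr => i _.
by rewrite !mxE big_ord1 !mxE.
Qed.

Lemma row_form_entry k m (X : 'M[R]_(k, m)) (M : 'M[R]_m) i j :
  row i X *m M *m (row j X)^T = ((X *m M *m X^T) i j)%:M.
Proof.
apply/matrixP => a b; rewrite !ord1 !mxE; apply: eq_bigr => l _.
rewrite !mxE; congr (_ * _); apply: eq_bigr => m' _; by rewrite !mxE.
Qed.

Lemma factor_cube k (a : 'M[R]_(k, p)) (b : 'M[R]_(k, q)) c :
  a *m Lm *m a^T = c%:M -> b *m Rm *m b^T = 1%:M ->
  (a^T *m b)^T *m Lm *m (a^T *m b) *m Rm *m (a^T *m b)^T = c *: (a^T *m b)^T.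
Proof.
move=> aLa bRb.
have -> : (a^T *m b)^T *m Lm *m (a^T *m b) *m Rm *m (a^T *m b)^T =
          b^T *m (a *m Lm *m a^T) *m (b *m Rm *m b^T) *m a.
  by rewrite !trmx_mul !trmxK !mulmxA.
by rewrite aLa bRb mulmx1 mul_mx_scalar -scalemxAl trmx_mul trmxK.
Qed.

Lemma factor_LRSVD (Y : 'M[R]_(p, q)) (a : 'M[R]_(\rank Y, p))
    (b : 'M[R]_(\rank Y, q)) (s : R) :
  0 < s -> Y = a^T *m b ->
  a *m Lm *m a^T = (s ^+ 2)%:M -> b *m Rm *m b^T = 1%:M ->
  @is_LRSVD R p q Lm Rm Y (fun _ => s) (fun i => s^-1 *: (row i a)^T)
                   (fun i => (row i b)^T).
Proof.
move=> s_gt0 Yab aLa bRb; have s_neq0 : s != 0 by rewrite gt_eqF.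
split=> // [|i j|i j].
- rewrite {1}Yab mulmx_tr_rows; apply: eq_bigr => i _.
  by rewrite trmxK -scalemxAl scalerA mulfV // scale1r.
- rewrite !linearZ /= trmxK -!scalemxAl scalerA row_form_entry aLa mxE.
  rewrite scale_scalar_mx -expr2 exprVn; congr (_%:M).
  by case: eqP => _; rewrite ?mulr1n ?mulr0n ?mulr0 // mulVf // expf_neq0.
- by rewrite trmxK row_form_entry bRb mxE.
Qed.

Lemma factor_weakly_sep k1 k2 (a1 : 'M[R]_(k1, p)) (b1 : 'M[R]_(k1, q))
    (a2 : 'M[R]_(k2, p)) (b2 : 'M[R]_(k2, q)) :
  a1 *m Lm *m a2^T = 0 -> b1 *m Rm *m b2^T = 0 ->
  weakly_sep Lm Rm (a1^T *m b1) (a2^T *m b2).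
Proof.
move=> aLa bRb; split.
- have -> : (a1^T *m b1)^T *m Lm *m (a2^T *m b2) = b1^T *m (a1 *m Lm *m a2^T) *m b2.
    by rewrite trmx_mul trmxK !mulmxA.
  by rewrite aLa mulmx0 mul0mx.
- have -> : a1^T *m b1 *m Rm *m (a2^T *m b2)^T = a1^T *m (b1 *m Rm *m b2^T) *m a2.
    by rewrite trmx_mul trmxK !mulmxA.
  by rewrite bRb mulmx0 mul0mx.
Qed.

Lemma factor_consistent k (a : 'M[R]_(k, p)) (b : 'M[R]_(k, q)) :
  Lm^T = Lm -> Rm^T = Rm -> (a <= Lm)%MS -> (b <= Rm)%MS ->
  consistent Lm Rm (a^T *m b).
Proof.
move=> LmT RmT aL bR; rewrite /consistent LmT RmT trmx_mul trmxK.
by split; apply: submx_trans (submxMl _ _) _.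
Qed.
End Factorizations.

Section SingularValues.
Variables (R : realFieldType) (p q : nat) (Lm : 'M[R]_p) (Rm : 'M[R]_q).
Variables (k : nat) (Y : 'M[R]_(p, q)) (s : 'I_k -> R).
Variables (P : 'I_k -> 'cV[R]_p) (Q : 'I_k -> 'cV[R]_q).
Hypothesis Y_sum : Y = \sum_(i < k) s i *: (P i *m (Q i)^T).
Hypothesis P_orthonormal : forall i j, (P i)^T *m Lm *m P j = (i == j)%:R%:M.
Hypothesis Q_orthonormal : forall i j, (Q i)^T *m Rm *m Q j = (i == j)%:R%:M.

Lemma sum_scale_delta m n (F : 'I_k -> 'M[R]_(m, n)) i :
  \sum_j (s j * (j == i)%:R) *: F j = s i *: F i.
Proof.
rewrite (bigD1 i) //= eqxx mulr1 big1 ?addr0 // => j /negbTE ->.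
by rewrite mulr0 scale0r.
Qed.

Lemma LRSVD_left_vector i : Y^T *m Lm *m P i = s i *: Q i.
Proof.
rewrite -sum_scale_delta Y_sum linear_sum /= !mulmx_suml; apply: eq_bigr => l _.
rewrite linearZ /= trmx_mul trmxK -!scalemxAl -!mulmxA (mulmxA (P l)^T).
by rewrite P_orthonormal mul_mx_scalar scalerA.
Qed.

Lemma LRSVD_right_vector i : Y *m Rm *m Q i = s i *: P i.
Proof.
rewrite -sum_scale_delta Y_sum !mulmx_suml; apply: eq_bigr => l _.
rewrite -!scalemxAl -!mulmxA (mulmxA (Q l)^T).
by rewrite Q_orthonormal mul_mx_scalar scalerA.
Qed.

Lemma LRSVD_vector_neq0 i : Q i != 0.
Proof.
apply/eqP => Qi0; have /matrixP/(_ 0 0) := Q_orthonormal i i.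
by rewrite Qi0 trmx0 !mul0mx eqxx !mxE /= => /eqP; rewrite eq_sym oner_eq0.
Qed.

Lemma LRSVD_cube_sqr c :
  Y^T *m Lm *m Y *m Rm *m Y^T = c *: Y^T -> (forall i, 0 < s i) ->
  forall i, s i ^+ 2 = c.
Proof.
move=> cube s_gt0 i.
(* Evaluate both sides of the cube identity on Lm P i. *)
have cube_Q : (s i ^+ 3) *: Q i = (c * s i) *: Q i.
  have := congr1 (fun X => X *m Lm *m P i) cube.
  rewrite /= -!scalemxAl LRSVD_left_vector scalerA => <-.
  rewrite -(mulmxA _ Y^T) -(mulmxA _ (Y^T *m Lm)) LRSVD_left_vector.
  rewrite -!scalemxAr -(mulmxA _ Y) -(mulmxA _ (Y *m Rm)) LRSVD_right_vector.
  by rewrite -scalemxAr LRSVD_left_vector !scalerA -expr2 -exprSr.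
move/eqP: cube_Q; rewrite -subr_eq0 -scalerBl scalemx_eq0.
rewrite (negbTE (LRSVD_vector_neq0 i)) orbF subr_eq0 exprSr.
by move=> /eqP /mulIf; apply; rewrite gt_eqF.
Qed.
End SingularValues.

Lemma strongly_sep_of_cubes (R : realFieldType) p q (Lm : 'M[R]_p)
    (Rm : 'M[R]_q) (Y1 Y2 : 'M[R]_(p, q)) (c1 c2 : R) :
  weakly_sep Lm Rm Y1 Y2 ->
  (exists s P Q, @is_LRSVD R p q Lm Rm Y1 s P Q) ->
  (exists s P Q, @is_LRSVD R p q Lm Rm Y2 s P Q) ->
  Y1^T *m Lm *m Y1 *m Rm *m Y1^T = c1 *: Y1^T ->
  Y2^T *m Lm *m Y2 *m Rm *m Y2^T = c2 *: Y2^T ->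
  c1 != c2 -> strongly_sep Lm Rm Y1 Y2.
Proof.
move=> wsep svd1 svd2 cube1 cube2 c12; split=> // s1 P1 Q1 s2 P2 Q2.
case=> Y1_sum _ s1_gt0 P1_on Q1_on [Y2_sum _ s2_gt0 P2_on Q2_on] i j.
apply/eqP => s12; move/eqP: c12; apply.
rewrite -(LRSVD_cube_sqr Y1_sum P1_on Q1_on cube1 s1_gt0 i) s12.
exact: (LRSVD_cube_sqr Y2_sum P2_on Q2_on cube2 s2_gt0 j).
Qed.

Lemma col_mx_gram (R : nzRingType) k1 k2 n (a1 : 'M[R]_(k1, n))
    (a2 : 'M[R]_(k2, n)) (M : 'M[R]_n) :
  col_mx a1 a2 *m M *m (col_mx a1 a2)^T =
  block_mx (a1 *m M *m a1^T) (a1 *m M *m a2^T)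
           (a2 *m M *m a1^T) (a2 *m M *m a2^T).
Proof. by rewrite tr_col_mx mul_col_mx mul_col_row. Qed.

Section RankAdditive.
Variables (R : realFieldType) (p q : nat) (A B : 'M[R]_(p, q)).
Hypothesis rank_add : \rank (A + B)%R = (\rank A + \rank B)%N.

Let a1 : 'M[R]_(\rank A, p) := (col_base A)^T.
Let b1 : 'M[R]_(\rank A, q) := row_base A.
Let a2 : 'M[R]_(\rank B, p) := (col_base B)^T.
Let b2 : 'M[R]_(\rank B, q) := row_base B.
Let PtL := col_mx a1 a2.
Let PtR := col_mx b1 b2.

Lemma A_factor : A = a1^T *m b1. Proof. by rewrite trmxK mulmx_base. Qed.
Lemma B_factor : B = a2^T *m b2. Proof. by rewrite trmxK mulmx_base. Qed.
Lemma sum_factor : A + B = PtL^T *m PtR.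
Proof. by rewrite tr_col_mx mul_row_col -A_factor -B_factor. Qed.

(* Rank additivity means exactly that the stacked bases are row-free. *)
Lemma PtL_free : row_free PtL.
Proof.
rewrite /row_free eqn_leq rank_leq_row /=.
by have := mxrankM_maxl PtL^T PtR; rewrite -sum_factor rank_add mxrank_tr.
Qed.

Lemma PtR_free : row_free PtR.
Proof.
rewrite /row_free eqn_leq rank_leq_row /=.
by have := mxrankM_maxr PtL^T PtR; rewrite -sum_factor rank_add.
Qed.

(* The left weight diag(1, 2) doubles the length of the rows of a2. *)
Let SL : 'M[R]_(\rank A + \rank B) := block_mx 1%:M 0 0 2%:M.

Lemma SL_unit : SL \in unitmx.
Proof.
by rewrite unitmxE det_ublock !det_scalar expr1n mul1r unitfE expf_neq0 ?pnatr_eq0.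
Qed.

Let Lm := frame_form PtL SL.
Let Rm := frame_form PtR 1%:M.

Lemma Lm_blocks :
  [/\ a1 *m Lm *m a1^T = 1%:M, a1 *m Lm *m a2^T = 0 &
      a2 *m Lm *m a2^T = (2 ^+ 2)%:M].
Proof.
have := frame_form_gram SL PtL_free; rewrite col_mx_gram tr_block_mx mulmx_block.
rewrite !trmx0 !tr_scalar_mx !mulmx0 !mul0mx !mul_scalar_mx !scale1r !addr0 !add0r.
by case/eq_block_mx => -> -> _ ->; rewrite scale_scalar_mx expr2.
Qed.

Lemma Rm_blocks :
  [/\ b1 *m Rm *m b1^T = 1%:M, b1 *m Rm *m b2^T = 0 & b2 *m Rm *m b2^T = 1%:M].
Proof.
have := frame_form_gram 1%:M PtR_free; rewrite col_mx_gram trmx1 mulmx1 -/Rm.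
by rewrite scalar_mx_block; case/eq_block_mx.
Qed.

Lemma rank_additive_strongly_sep :
  exists (Lm : 'M[R]_p) (Rm : 'M[R]_q),
    [/\ psd Lm, psd Rm, \rank Lm = (\rank A + \rank B)%N
      & \rank Rm = (\rank A + \rank B)%N] /\
    [/\ consistent Lm Rm (A + B), consistent Lm Rm A, consistent Lm Rm B
      & strongly_sep Lm Rm A B].
Proof.
have [aLa1 aLa12 aLa2] := Lm_blocks; have [bRb1 bRb12 bRb2] := Rm_blocks.
have [LmT RmT] : Lm^T = Lm /\ Rm^T = Rm by split; apply: (psd_gram _).1.
have PtL_Lm : (PtL <= Lm)%MS := Pt_sub_frame_form PtL_free SL_unit.
have PtR_Rm : (PtR <= Rm)%MS := Pt_sub_frame_form PtR_free (unitmx1 _ _).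
have [a1_Lm a2_Lm] : (a1 <= Lm)%MS /\ (a2 <= Lm)%MS.
  by split; apply: submx_trans PtL_Lm; rewrite -addsmxE ?addsmxSl ?addsmxSr.
have [b1_Rm b2_Rm] : (b1 <= Rm)%MS /\ (b2 <= Rm)%MS.
  by split; apply: submx_trans PtR_Rm; rewrite -addsmxE ?addsmxSl ?addsmxSr.
exists Lm, Rm; split.
  split; [exact: psd_gram | exact: psd_gram | |].
  - exact: frame_form_rank PtL_free SL_unit.
  - exact: frame_form_rank PtR_free (unitmx1 _ _).
split.
- by rewrite sum_factor; apply: factor_consistent.
- by rewrite A_factor; apply: factor_consistent.
- by rewrite B_factor; apply: factor_consistent.
apply: (@strongly_sep_of_cubes _ _ _ _ _ _ _ 1 (2 ^+ 2)).
- by rewrite A_factor B_factor; apply: factor_weakly_sep.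
- by do 3!eexists; apply: factor_LRSVD ltr01 A_factor _ bRb1; rewrite expr1n.
- by do 3!eexists; apply: factor_LRSVD _ B_factor aLa2 bRb2; rewrite ltr0n.
- by rewrite A_factor; apply: factor_cube aLa1 bRb1.
- by rewrite B_factor; apply: factor_cube aLa2 bRb2.
- by rewrite expr2 -natrM eq_sym pnatr_eq1.
Qed.
End RankAdditive.

Lemma traj_add (R : nzRingType) N L (X1 X2 : 'rV[R]_N) :
  traj L (X1 + X2) = traj L X1 + traj L X2.
Proof.
by apply/matrixP => i j; rewrite !mxE; case: insub => [k|]; rewrite ?mxE ?addr0.
Qed.

Theorem theorem1 (R : rcfType) (N L : nat) (X1 X2 : 'rV[R]_N)
  (r r1 r2 : nat) :
  (1 < L)%N -> (L < N)%N ->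
  \rank (traj L (X1 + X2)) = r ->
  \rank (traj L X1) = r1 ->
  \rank (traj L X2) = r2 ->
  (r1 + r2)%N = r ->
  exists (Lm : 'M[R]_L) (Rm : 'M[R]_(N - L + 1)),
    [/\ psd Lm, psd Rm, \rank Lm = r & \rank Rm = r] /\
    [/\ consistent Lm Rm (traj L (X1 + X2)),
        consistent Lm Rm (traj L X1),
        consistent Lm Rm (traj L X2) &
        strongly_sep Lm Rm (traj L X1) (traj L X2)].
Proof.
move=> _ _ rank_sum <- <- rank_add; rewrite traj_add in rank_sum *.
by rewrite -rank_add; apply: rank_additive_strongly_sep; rewrite rank_sum rank_add.
Qed.
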